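(* Let $\mathcal E,\mathcal D$ be sets, $K,\eta\in\mathbb N$, $\psi:\mathcal E^*\times[K]\to\mathbb R^\eta$ a function, and $\mathcal G$ a finite nonempty set of functions $\{+,-,0\}^K\to\mathcal D$. Then $\mathrm{Ndim}(\mathcal F_{\psi,\mathcal G})\le2\eta\log(8eK)+2\log|\mathcal G|=O(\eta\log K+\log|\mathcal G|)$.
   Context: $\mathcal E^*=\bigcup_{n\ge1}\mathcal E^n$. For $\vec w\in\mathbb R^\eta$ and $g\in\mathcal G$, $f_{\vec w,g}(P)=g(\mathrm{sign}(\psi(P,1)\cdot\vec w),\dots,\mathrm{sign}(\psi(P,K)\cdot\vec w))$, with sign values $+,-,0$; $\mathcal F_{\psi,\mathcal G}=\{f_{\vec w,g}:\vec w\in\mathbb R^\eta,g\in\mathcal G\}$. Natarajan dimension: a finite $\mathcal P\subseteq\mathcal E^*$ is shattered by $\mathcal F$ if there are $f^0,f^1:\mathcal E^*\to\mathcal D$ with $f^0(P)\ne f^1(P)$ on $\mathcal P$ such that for every $B\subseteq\mathcal P$ some $f\in\mathcal F$ equals $f^0$ on $B$ and $f^1$ on $\mathcal P\setminus B$; $\mathrm{Ndim}$ is the largest size of a shattered set. Logarithms are base 2. *)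

From mathcomp Require Import all_boot all_order all_algebra.
From mathcomp Require Import all_classical all_reals all_analysis.
Set Implicit Arguments. Unset Strict Implicit. Unset Printing Implicit Defensive.
Import Order.TTheory GRing.Theory Num.Theory.
Local Open Scope ring_scope.

Inductive sgn := SPlus | SMinus | SZero.

Definition sign {R : realType} (x : R) : sgn :=
  if 0 < x then SPlus else if x < 0 then SMinus else SZero.

Definition dotp {R : realType} (eta : nat) (u v : 'I_eta -> R) : R :=
  \sum_(i < eta) u i * v i.

(* f_{w,g}(P) = g(sign(psi(P,1).w), ..., sign(psi(P,K).w)).
   Elements of E^* are represented by (nonempty) sequences [seq E]. *)
Definition f_wg {R : realType} {E D : Type} (K eta : nat)
  (psi : seq E -> 'I_K -> 'I_eta -> R) (w : 'I_eta -> R)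
  (g : ('I_K -> sgn) -> D) : seq E -> D :=
  fun P => g (fun k => sign (dotp (psi P k) w)).

(* The class F_{psi,G}, where G = { g i | i < m } (g injective). *)
Definition Fclass {R : realType} {E D : Type} (K eta m : nat)
  (psi : seq E -> 'I_K -> 'I_eta -> R) (g : 'I_m -> ('I_K -> sgn) -> D)
  (f : seq E -> D) : Prop :=
  exists (w : 'I_eta -> R) (i : 'I_m), f = f_wg psi w (g i).

Definition N_shattered {E D : Type} (F : (seq E -> D) -> Prop)
  (n : nat) (p : 'I_n -> seq E) : Prop :=
  (forall i, p i <> [::]) /\ injective p /\
  exists f0 f1 : seq E -> D,
    (forall i, f0 (p i) <> f1 (p i)) /\
    forall B : {set 'I_n}, exists f, F f /\
      forall i, (i \in B -> f (p i) = f0 (p i)) /\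
                (i \notin B -> f (p i) = f1 (p i)).

Definition log2 {R : realType} (x : R) : R := ln x / ln 2.

From HB Require Import structures.
From mathcomp Require Import all_boot all_order all_algebra.
From mathcomp Require Import all_classical all_reals all_analysis.
From mathcomp Require Import ring lra zify.
Set Implicit Arguments. Unset Strict Implicit. Unset Printing Implicit Defensive.
Import Order.TTheory GRing.Theory Num.Theory.
Local Open Scope ring_scope.

(* If the n points are shattered, the 2^n labellings all have the
   form j |-> [g (signs of w against psi(p_j, k), k < K) = f0 p_j], so
   2^n <= |G| * #(sign patterns u |-> sign (u C)) for the eta x nK matrix C
   whose columns are the psi(p_j, k).  For an r x N matrix C of rank d the
   number of sign patterns (zero allowed) is at most S(N, d) with
   S(N+1, d+1) = S(N, d+1) + 2 S(N, d): split off a column c; a pattern of the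
   other columns D that is not realised on ker c determines the sign on c
   (two realisations of opposite signs on c combine positively into ker c),
   the others extend in at most three ways, and on ker c the rank drops.
   Finally S(N, d) (d/N)^d <= (1 + 2d/N)^N <= e^(2d), and logarithms give
   the bound. *)

Definition opt_of_sgn (s : sgn) : option bool :=
  match s with SPlus => Some true | SMinus => Some false | SZero => None end.
Definition sgn_of_opt (o : option bool) : sgn :=
  match o with Some true => SPlus | Some false => SMinus | None => SZero end.
Lemma opt_of_sgnK : cancel opt_of_sgn sgn_of_opt. Proof. by case. Qed.
HB.instance Definition _ := Finite.copy sgn (can_type opt_of_sgnK).

Lemma card_sgn : #|{: sgn}| = 3%N.
Proof.
have /bij_eq_card -> : bijective opt_of_sgn.
  by exists sgn_of_opt; [exact: opt_of_sgnK | case=> [[]|]].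
by rewrite card_option card_bool.
Qed.

Section Sign.
Variable R : realType.
Implicit Types a b l m x : R.

Variant sign_spec x : sgn -> Prop :=
  | SignPos of 0 < x : sign_spec x SPlus
  | SignNeg of x < 0 : sign_spec x SMinus
  | SignZero of x = 0 : sign_spec x SZero.

Lemma signP x : sign_spec x (sign x).
Proof. by rewrite /sign; case: ltrgt0P; constructor. Qed.

Lemma sign_pcomb a b l m : sign a = sign b -> 0 < l -> 0 < m ->
  sign (l * a + m * b) = sign a.
Proof.
move=> + l0 m0; case: (signP a) => a0; case: (signP b) => b0 //= _;
  case: signP => c0 //; exfalso; nra.
Qed.

Lemma sign_neq_mul_lt0 a b : a != 0 -> b != 0 -> sign a != sign b -> a * b < 0.
Proof.
move=> /eqP a0 /eqP b0; case: (signP a) => ha; case: (signP b) => hb //= _; nra.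
Qed.

Lemma mul_lt0_norm_comb a b : a * b < 0 -> `|b| * a + `|a| * b = 0.
Proof. by case: (ger0P a) => ha; case: (ger0P b) => hb ab0; nra. Qed.

End Sign.

(* Closed form: [sgnpat_bound N d = \sum_(i <= d) 'C(N, i) * 2 ^ i]. *)
Fixpoint sgnpat_bound (N d : nat) : nat :=
  match N, d with
  | N'.+1, d'.+1 => sgnpat_bound N' d + 2 * sgnpat_bound N' d'
  | _, _ => 1
  end.

Lemma sgnpat_bound0 N : sgnpat_bound N 0 = 1%N.
Proof. by case: N. Qed.

Lemma sgnpat_bound_gt0 N d : (0 < sgnpat_bound N d)%N.
Proof. by elim: N d => [|N IH] [|d] //=; rewrite addn_gt0 IH. Qed.

Lemma leq_sgnpat_boundnS N d : (sgnpat_bound N d <= sgnpat_bound N d.+1)%N.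
Proof.
elim: N d => [|N IH] [|d] //=; first by rewrite sgnpat_bound0 addn2.
by rewrite leq_add // leq_mul2l IH orbT.
Qed.

Lemma leq_sgnpat_bound N : {homo sgnpat_bound N : d d' / (d <= d')%N}.
Proof. exact: homo_leq leqnn leq_trans (leq_sgnpat_boundnS N). Qed.

Lemma leq_sgnpat_boundSn N d : (sgnpat_bound N d <= sgnpat_bound N.+1 d)%N.
Proof. by case: d => [|d] /=; rewrite ?sgnpat_bound0 ?leq_addr. Qed.

Section SignPatterns.
Variable R : realType.

Definition sgnpat r N (C : 'M[R]_(r, N)) (u : 'rV[R]_r) : {ffun 'I_N -> sgn} :=
  [ffun j => sign ((u *m C) 0 j)].

Definition sgnpats r N (C : 'M[R]_(r, N)) : {set {ffun 'I_N -> sgn}} :=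
  [set s | `[< exists u, sgnpat C u = s >]].

Lemma sgnpatsP r N (C : 'M[R]_(r, N)) s :
  reflect (exists u, sgnpat C u = s) (s \in sgnpats C).
Proof. by rewrite inE; apply: (iffP (asboolP _)). Qed.

Lemma mem_sgnpats r N (C : 'M[R]_(r, N)) u : sgnpat C u \in sgnpats C.
Proof. by apply/sgnpatsP; exists u. Qed.

Lemma sgnpat_mulmx r r' N (A : 'M[R]_(r', r)) (C : 'M[R]_(r, N)) v :
  sgnpat (A *m C) v = sgnpat C (v *m A).
Proof. by apply/ffunP => j; rewrite !ffunE mulmxA. Qed.

Lemma sgnpats_kermxP r N (c : 'cV[R]_r) (D : 'M[R]_(r, N)) t :
  reflect (exists2 u, u *m c = 0 & sgnpat D u = t) (t \in sgnpats (kermx c *m D)).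
Proof.
apply: (iffP (sgnpatsP _ _)) => [[v <-] | [u uc0 <-]].
  by exists (v *m kermx c); [rewrite -mulmxA mulmx_ker mulmx0 | rewrite sgnpat_mulmx].
exists (u *m pinvmx (kermx c)).
by rewrite sgnpat_mulmx mulmxKpV // sub_kermx uc0.
Qed.

Lemma sgnpats_kermx_sub r N (c : 'cV[R]_r) (D : 'M[R]_(r, N)) :
  sgnpats (kermx c *m D) \subset sgnpats D.
Proof. by apply/fintype.subsetP => t /sgnpats_kermxP[u _ <-]; apply: mem_sgnpats. Qed.

Lemma mxrank_rsubmx r p q (A : 'M[R]_(r, p + q)) : (\rank (rsubmx A) <= \rank A)%N.
Proof.
have -> : rsubmx A = A *m col_mx 0 1%:M.
  by rewrite -{2}(hsubmxK A) mul_row_col mulmx0 mulmx1 add0r.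
exact: mxrankM_maxl.
Qed.

Lemma mxrank_kermx_mul_lt r N (c : 'cV[R]_r) (D : 'M[R]_(r, N)) : c != 0 ->
  (\rank (kermx c *m D) < \rank (row_mx c D))%N.
Proof.
move=> c_neq0; rewrite -{1}(row_mxKr c D) mulmx_rsub.
apply: leq_ltn_trans (mxrank_rsubmx _) _; apply: rank_ltmx.
rewrite ltmxE submxMl /=; apply: contra c_neq0 => /submxP[X eX].
apply/eqP; have := congr1 lsubmx eX; rewrite row_mxKl => ->.
by rewrite -!mulmx_lsub row_mxKl mulmx_ker mulmx0.
Qed.

Definition shead N (s : {ffun 'I_(1 + N) -> sgn}) : sgn := s (lshift N ord0).

Definition sbehead N (s : {ffun 'I_(1 + N) -> sgn}) : {ffun 'I_N -> sgn} :=
  [ffun j => s (rshift 1 j)].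

Lemma shead_sbehead_inj N :
  injective (fun s : {ffun 'I_(1 + N) -> sgn} => (shead s, sbehead s)).
Proof.
move=> s1 s2 [eh /ffunP et]; apply/ffunP => i; case: (splitP i) => [j | k] ei.
  have -> : i = lshift N j by apply: val_inj.
  by rewrite (ord1 j).
have -> : i = rshift 1 k by apply: val_inj.
by have := et k; rewrite !ffunE.
Qed.

Lemma card_sbehead_in N (Q : {set {ffun 'I_N -> sgn}}) :
  (#|[set s : {ffun 'I_(1 + N) -> sgn} | sbehead s \in Q]| <= 3 * #|Q|)%N.
Proof.
rewrite -(card_imset _ (@shead_sbehead_inj N)) -card_sgn -cardsT -cardsX.
apply/subset_leq_card/fintype.subsetP => _ /imsetP[s + ->].
by rewrite !inE.
Qed.

Lemma shead_sgnpat r N (c : 'cV[R]_r) (D : 'M[R]_(r, N)) u :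
  shead (sgnpat (row_mx c D) u) = sign ((u *m c) 0 0).
Proof. by rewrite /shead ffunE mul_mx_row row_mxEl. Qed.

Lemma sbehead_sgnpat r N (c : 'cV[R]_r) (D : 'M[R]_(r, N)) u :
  sbehead (sgnpat (row_mx c D) u) = sgnpat D u.
Proof. by apply/ffunP => j; rewrite !ffunE mul_mx_row row_mxEr. Qed.

Lemma mx11_eq0 (A : 'M[R]_1) : A 0 0 = 0 -> A = 0.
Proof. by move=> A00; apply/matrixP => i j; rewrite !ord1 A00 mxE. Qed.

Lemma sgnpat_sign_change r N (c : 'cV[R]_r) (D : 'M[R]_(r, N)) u1 u2 :
  sgnpat D u1 = sgnpat D u2 -> (u1 *m c) 0 0 * (u2 *m c) 0 0 < 0 ->
  sgnpat D u1 \in sgnpats (kermx c *m D).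
Proof.
set a1 := (u1 *m c) 0 0; set a2 := (u2 *m c) 0 0 => e12 a12_lt0.
have [a1_gt0 a2_gt0] : 0 < `|a1| /\ 0 < `|a2|.
  by move: (ltr0_neq0 a12_lt0); rewrite mulf_eq0 negb_or !normr_gt0 => /andP.
have combE k (A B : 'M[R]_(1, k)) x y j :
    (x *: A + y *: B) 0 j = x * A 0 j + y * B 0 j by rewrite !mxE.
apply/sgnpats_kermxP; exists (`|a2| *: u1 + `|a1| *: u2).
  by apply: mx11_eq0; rewrite mulmxDl -!scalemxAl combE mul_lt0_norm_comb.
apply/ffunP => j; rewrite !ffunE mulmxDl -!scalemxAl combE.
by apply: sign_pcomb => //; have /ffunP/(_ j) := e12; rewrite !ffunE.
Qed.

Lemma sign_head_eq r N (c : 'cV[R]_r) (D : 'M[R]_(r, N)) u1 u2 :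
  sgnpat D u1 = sgnpat D u2 -> sgnpat D u1 \notin sgnpats (kermx c *m D) ->
  sign ((u1 *m c) 0 0) = sign ((u2 *m c) 0 0).
Proof.
move=> e12 notin_ker; apply/eqP; apply: contraNT notin_ker => sign_neq.
have [a1_0 | a1_neq0] := eqVneq ((u1 *m c) 0 0) 0.
  by apply/sgnpats_kermxP; exists u1 => //; apply: mx11_eq0.
have [a2_0 | a2_neq0] := eqVneq ((u2 *m c) 0 0) 0.
  by apply/sgnpats_kermxP; exists u2; [apply: mx11_eq0 | rewrite e12].
exact/(sgnpat_sign_change e12)/sign_neq_mul_lt0.
Qed.

Lemma card_sgnpats_row_0mx r N (D : 'M[R]_(r, N)) :
  (#|sgnpats (row_mx (0 : 'cV[R]_r) D)| <= #|sgnpats D|)%N.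
Proof.
have sbehead_inj : {in sgnpats (row_mx 0 D) &, injective (@sbehead N)}.
  move=> _ _ /sgnpatsP[u1 <-] /sgnpatsP[u2 <-] e12.
  apply: (@shead_sbehead_inj N); congr pair => //.
  by rewrite !shead_sgnpat !mulmx0 mxE.
rewrite -(card_in_imset sbehead_inj); apply/subset_leq_card/fintype.subsetP.
by move=> _ /imsetP[_ /sgnpatsP[u <-] ->]; rewrite sbehead_sgnpat mem_sgnpats.
Qed.

Lemma card_sgnpats_row_mx r N (c : 'cV[R]_r) (D : 'M[R]_(r, N)) :
  (#|sgnpats (row_mx c D)| <= #|sgnpats D| + 2 * #|sgnpats (kermx c *m D)|)%N.
Proof.
set P := sgnpats (row_mx c D); set Q := sgnpats (kermx c *m D).
set PQ := [set s | sbehead s \in Q].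
have card_in : (#|P :&: PQ| <= 3 * #|Q|)%N.
  exact: leq_trans (subset_leq_card (subsetIr _ _)) (card_sbehead_in Q).
have sbehead_inj : {in P :\: PQ &, injective (@sbehead N)}.
  move=> s1 s2 /setDP[/sgnpatsP[u1 <-] s1Q] /setDP[/sgnpatsP[u2 <-] _].
  move: s1Q; rewrite inE !sbehead_sgnpat => s1Q e12.
  apply: (@shead_sbehead_inj N); congr pair; last by rewrite !sbehead_sgnpat.
  by rewrite !shead_sgnpat; apply: sign_head_eq e12 s1Q.
have card_out : (#|P :\: PQ| <= #|sgnpats D :\: Q|)%N.
  rewrite -(card_in_imset sbehead_inj); apply/subset_leq_card/fintype.subsetP.
  move=> _ /imsetP[_ /setDP[/sgnpatsP[u <-] sQ] ->].
  rewrite inE sbehead_sgnpat in sQ.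
  by apply/setDP; rewrite sbehead_sgnpat mem_sgnpats.
rewrite -(cardsID PQ P) addnC; apply: leq_trans (leq_add card_out card_in) _.
rewrite -(cardsID Q (sgnpats D)) (finset.setIidPr (sgnpats_kermx_sub c D)) -/Q.
lia.
Qed.

Lemma card_sgnpats N r (C : 'M[R]_(r, N)) :
  (#|sgnpats C| <= sgnpat_bound N (\rank C))%N.
Proof.
elim: N r C => [|N IH] r C.
  by rewrite (leq_trans (max_card _)) // card_ffun card_ord.
rewrite -(hsubmxK (C : 'M[R]_(r, 1 + N))); move: (lsubmx _) (rsubmx _) => c D.
have [-> | c_neq0] := eqVneq c 0.
  rewrite (rank_row_0mx 1 D) (leq_trans (card_sgnpats_row_0mx D)) //.
  exact: leq_trans (IH _ D) (leq_sgnpat_boundSn _ _).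
have rankD : (\rank D <= \rank (row_mx c D))%N.
  by rewrite -{1}(row_mxKr c D) mxrank_rsubmx.
have := mxrank_kermx_mul_lt D c_neq0.
case: (\rank (row_mx c D)) rankD => [|d] // rankD rank_ker /=.
apply: leq_trans (card_sgnpats_row_mx c D) _; apply: leq_add.
  exact: leq_trans (IH _ D) (leq_sgnpat_bound _ rankD).
by rewrite leq_mul2l (leq_trans (IH _ _)) ?orbT // leq_sgnpat_bound.
Qed.

End SignPatterns.

Section Logarithms.
Variable R : realType.

Lemma ln_le_subr1 (y : R) : 0 < y -> ln y <= y - 1.
Proof. by move=> y0; rewrite -{1}(subrKC 1 y); apply: le_ln1Dx; lra. Qed.

Lemma ln2_ge_half : (1 / 2 : R) <= ln 2.
Proof.
have := @ln_le_subr1 (2^-1) ltac:(by rewrite invr_gt0).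
by rewrite lnV ?posrE //; lra.
Qed.

Lemma sgnpat_bound_le_exprD N d (x : R) : 0 <= x <= 1 ->
  (sgnpat_bound N d)%:R * x ^+ d <= (1 + 2 * x) ^+ N.
Proof.
case/andP=> x0 x1; elim: N d => [|N IH] [|d] /=.
- by rewrite mulr1.
- by rewrite mul1r exprn_ile1.
- by rewrite mul1r exprn_ege1 // lerDl mulr_ge0.
have := IH d.+1; have := IH d; rewrite natrD natrM !exprS => IHd IHdS.
have : 0 <= x * ((1 + 2 * x) ^+ N - (sgnpat_bound N d)%:R * x ^+ d).
  by rewrite mulr_ge0 // subr_ge0.
nra.
Qed.

Lemma ln_sgnpat_bound N d : (0 < d <= N)%N ->
  ln (sgnpat_bound N d)%:R <= d%:R * (2 + ln N%:R - ln d%:R) :> R.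
Proof.
case/andP=> d0 dN.
have N0 : (0 < N)%N by apply: leq_trans dN.
have Ngt0 : (0 : R) < N%:R by rewrite ltr0n.
have dgt0 : (0 : R) < d%:R by rewrite ltr0n.
set x : R := d%:R / N%:R.
have x0 : 0 < x by rewrite divr_gt0.
have x01 : 0 <= x <= 1 by rewrite ltW // ler_pdivrMr // mul1r ler_nat.
have pow_le_expR : (1 + 2 * x) ^+ N <= expR (2 * d%:R).
  apply: (@le_trans _ _ (expR (2 * x) ^+ N)).
    by rewrite lerXn2r ?nnegrE ?expR_ge0 ?expR_ge1Dx // addr_ge0 ?mulr_ge0 // ltW.
  rewrite -expRM_natl (_ : _ * _ = 2 * d%:R) //.
  by rewrite /x; field; rewrite gt_eqF.
have := le_trans (sgnpat_bound_le_exprD N d x01) pow_le_expR.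
rewrite -ler_ln ?posrE ?mulr_gt0 ?exprn_gt0 ?ltr0n ?sgnpat_bound_gt0 ?expR_gt0 //.
rewrite lnM ?posrE ?exprn_gt0 ?ltr0n ?sgnpat_bound_gt0 // lnXn // expRK.
rewrite /x ln_div ?posrE //; lra.
Qed.

Lemma ln8 : ln (8 : R) = 3 * ln 2.
Proof. by rewrite (_ : 8 = 2 ^+ 3) ?lnXn // ?mulr_natl; lra. Qed.

Lemma ln_8eK K : (0 < K)%N -> ln (8 * expR 1 * K%:R) = 3 * ln 2 + 1 + ln K%:R :> R.
Proof.
move=> K0; have Kgt0 : (0 : R) < K%:R by rewrite ltr0n.
by rewrite !lnM ?posrE ?mulr_gt0 ?expR_gt0 // expRK ln8.
Qed.

Lemma ln_bound_of_count n K eta (lnm : R) : (0 < eta <= n * K)%N ->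
  n%:R * ln 2 <= lnm + eta%:R * (2 + ln (n * K)%:R - ln eta%:R) ->
  n%:R * ln 2 <= 2 * eta%:R * (3 * ln 2 + 1 + ln K%:R) + 2 * lnm.
Proof.
case/andP=> eta0 etanK count.
have /andP[n0 K0] : (0 < n)%N && (0 < K)%N by rewrite -muln_gt0 (leq_trans eta0).
have [ngt0 Kgt0 etagt0] : [/\ (0 : R) < n%:R, (0 : R) < K%:R & (0 : R) < eta%:R].
  by rewrite !ltr0n.
have ln2_half := ln2_ge_half.
have n_half : n%:R / 2 <= n%:R * ln 2 :> R.
  by apply: ler_wpM2l => //; lra.
have : eta%:R * (ln n%:R - 3 * ln 2 - ln eta%:R) <= n%:R / 8 - eta%:R :> R.
  have := @ln_le_subr1 (n%:R / (8 * eta%:R)) ltac:(by rewrite divr_gt0 ?mulr_gt0).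
  rewrite ln_div ?lnM ?posrE ?mulr_gt0 // ln8 => /(ler_wpM2l (ltW etagt0)).
  have -> : eta%:R * (n%:R / (8 * eta%:R) - 1) = n%:R / 8 - eta%:R :> R.
    by field; rewrite gt_eqF.
  lra.
rewrite natrM lnM ?posrE // in count; lra.
Qed.

Lemma log2_bound_of_count n K eta m : (0 < m)%N ->
  (2 ^ n <= m * sgnpat_bound (n * K) eta)%N ->
  (n%:R : R) <= 2 * eta%:R * log2 (8 * expR 1 * K%:R) + 2 * log2 (m%:R : R).
Proof.
move=> m0 count; set S := sgnpat_bound (n * K) eta in count.
have ln2_gt0 : (0 : R) < ln 2 by rewrite ln_gt0 // ltr1n.
have lnm_ge0 : (0 : R) <= ln m%:R by rewrite ln_ge0 // ler1n.
have ln_count : n%:R * ln 2 <= ln m%:R + ln S%:R :> R.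
  have S0 : (0 < S)%N by apply: sgnpat_bound_gt0.
  rewrite mulr_natl -lnXn // -lnM ?posrE ?ltr0n //.
  by rewrite ler_ln ?posrE ?exprn_gt0 ?mulr_gt0 ?ltr0n // -natrM -natrX ler_nat.
suff : n%:R * ln 2 <= 2 * eta%:R * ln (8 * expR 1 * K%:R) + 2 * ln m%:R :> R.
  by rewrite /log2 !mulrA -mulrDl ler_pdivlMr.
have [eta0 | eta0] := posnP eta.
  by move: ln_count; rewrite /S eta0 sgnpat_bound0 ln1 mulr0n mulr0 mul0r; lra.
have [K0 | K0] := posnP K.
  move: ln_count; rewrite /S K0 muln0 ln1 !mulr0n !mulr0 (ln0 (x := 0)) //.
  by rewrite mulr0; lra.
rewrite ln_8eK //.
have lnK_ge0 : (0 : R) <= ln K%:R by rewrite ln_ge0 // ler1n.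
have [nK_lt | eta_le] := ltnP (n * K) eta.
  have : n%:R * ln 2 <= eta%:R * ln 2 :> R.
    by rewrite ler_pM2r // ler_nat (leq_trans _ (ltnW nK_lt)) // leq_pmulr.
  have : (0 : R) <= eta%:R * ln K%:R by rewrite mulr_ge0.
  have : (0 : R) <= eta%:R * ln 2 by rewrite mulr_ge0 // ltW.
  have := ler0n R eta; lra.
apply: (ln_bound_of_count (lnm := ln m%:R)); first by rewrite eta0.
by apply: (le_trans ln_count); rewrite lerD2l ln_sgnpat_bound // eta0.
Qed.

End Logarithms.

Section Shattering.
Variables (R : realType) (E D : Type) (K eta m n : nat).
Variables (psi : seq E -> 'I_K -> 'I_eta -> R) (g : 'I_m -> ('I_K -> sgn) -> D).
Variable p : 'I_n -> seq E.

Definition feature_mx : 'M[R]_(eta, #|{: 'I_n * 'I_K}|) :=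
  \matrix_(a, t) psi (p (enum_val t).1) (enum_val t).2 a.

Lemma sgnpat_feature_mx w j k :
  sgnpat feature_mx (\row_a w a) (enum_rank (j, k)) = sign (dotp (psi (p j) k) w).
Proof.
rewrite ffunE mxE /dotp; congr sign.
by apply: eq_bigr => a _; rewrite !mxE enum_rankK mulrC.
Qed.

Definition labelled_set (f0 : seq E -> D)
    (x : 'I_m * {ffun 'I_#|{: 'I_n * 'I_K}| -> sgn}) : {set 'I_n} :=
  [set j | `[< g x.1 (fun k => x.2 (enum_rank (j, k))) = f0 (p j) >]].

Lemma N_shattered_count : N_shattered (Fclass psi g) p ->
  (2 ^ n <= m * #|sgnpats feature_mx|)%N.
Proof.
move=> [_ [_ [f0 [f1 [f01 shat]]]]].
have cover : powerset [set: 'I_n] \subset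
    labelled_set f0 @: finset.setX [set: 'I_m] (sgnpats feature_mx).
  apply/fintype.subsetP => B _; have [_ [[w [i ->]] fB]] := shat B.
  apply/imsetP; exists (i, sgnpat feature_mx (\row_a w a)).
    by rewrite finset.in_setX finset.in_setT mem_sgnpats.
  apply/setP => j; rewrite inE /=.
  under eq_fun do rewrite sgnpat_feature_mx.
  have [jB | jB] := boolP (j \in B); have [f0j f1j] := fB j.
    by apply/esym/asboolP/f0j.
  by apply/esym/asboolP; rewrite [_ i _](f1j jB); apply/nesym/f01.
have := subset_leq_card cover.
rewrite card_powerset cardsT card_ord => /leq_trans; apply.
by rewrite (leq_trans (leq_imset_card _ _)) // finset.cardsX cardsT card_ord.
Qed.

End Shattering.

Theorem theorem11 (R : realType) (E D : Type) (K eta m : nat)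
  (psi : seq E -> 'I_K -> 'I_eta -> R)
  (g : 'I_m -> ('I_K -> sgn) -> D) (g_inj : injective g) (m_pos : (0 < m)%N)
  (n : nat) (p : 'I_n -> seq E) :
  N_shattered (Fclass psi g) p ->
  (n%:R : R) <= 2 * eta%:R * log2 (8 * expR 1 * K%:R) + 2 * log2 (m%:R : R).
Proof.
move=> /N_shattered_count count; apply: log2_bound_of_count => //.
apply: (leq_trans count); rewrite leq_mul2l; apply/orP; right.
have <- : #|{: 'I_n * 'I_K}| = (n * K)%N by rewrite card_prod !card_ord.
exact: leq_trans (card_sgnpats _) (leq_sgnpat_bound _ (rank_leq_row _)).
Qed.
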